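(* Let $\eta\in(0,1)$. For $N_S>0$, $\xi\in[0,1]$ let $$I(\xi;N_S)=4N_S\left\{\frac{1-\xi}{1-2\eta^2\left(\sqrt{\xi N_S(1+\xi N_S)}-\xi N_S\right)}+\frac{\xi\left[(1-\eta^2)^2+\eta^4\right]}{(1-\eta^2)\left(1+2\xi N_S\eta^2(1-\eta^2)\right)}\right\},$$ and for $\mathcal N_S>0$ and real $M\ge1$ let $\mathcal I(M;\mathcal N_S)=\max_{\xi\in[0,1]}M\,I(\xi;\mathcal N_S/M)$. Let $\bar N_S(\eta)=0$ if $\eta\le1/\sqrt2$, and for $\eta>1/\sqrt2$ let $\bar N_S(\eta)$ be the unique zero on $(0,\infty)$ of $N_S\mapsto\frac{1}{4N_S}\partial_\xi I(\xi;N_S)|_{\xi=1}$. Then there exists $\bar K(\eta)\ge0$ such that for every $\mathcal N_S>\bar K(\eta)$, $M=1$ maximizes $\mathcal I(\cdot;\mathcal N_S)$ over $M\in[1,\infty]$ (with $M=\infty$ understood as the limit $M\to\infty$). Moreover $\bar K(\eta)=0$ for $0<\eta\le1/\sqrt2$, and $\bar K(\eta)\ge\bar N_S(\eta)$ for $\eta>1/\sqrt2$.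
   Context: $I(\xi;N_S)$ is the quantum Fisher information for estimating the transmission $\eta$ of a pure-loss (zero-temperature) bosonic channel using one single-mode pure displaced squeezed probe with mean photon number $N_S$, fraction $\xi$ in squeezing and $1-\xi$ in displacement. With $M$ probes and total photon budget $\mathcal N_S=MN_S$, the total quantum Fisher information is $M\,I(\xi;\mathcal N_S/M)$, with $M$ relaxed to a continuous variable. *)

From Stdlib Require Import Reals.
From Coquelicot Require Import Coquelicot.
Open Scope R_scope.

Definition Iqfi (eta xi NS : R) : R :=
  4 * NS *
  ( (1 - xi) / (1 - 2 * eta ^ 2 * (sqrt (xi * NS * (1 + xi * NS)) - xi * NS))
  + xi * ((1 - eta ^ 2) ^ 2 + eta ^ 4)
      / ((1 - eta ^ 2) * (1 + 2 * xi * NS * eta ^ 2 * (1 - eta ^ 2)))).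

(* calI(M; NN) = max_{xi in [0,1]} M * I(xi; NN / M), written as the supremum
   (the max is attained: continuous function on a compact set). *)
Definition calI (eta M NN : R) : R :=
  real (Lub_Rbar (fun y => exists xi, 0 <= xi <= 1 /\ y = M * Iqfi eta xi (NN / M))).

Definition dI1 (eta NS : R) : R :=
  / (4 * NS) * Derive (fun xi => Iqfi eta xi NS) 1.

From Stdlib Require Import Reals Lra.
From Coquelicot Require Import Coquelicot.
Open Scope R_scope.

(* Write I(xi; N) = 4 N ((1 - xi) A(xi N) + xi B(xi N)), where A >= 1 is the
   per-photon rate of the displaced part and B <= B(0) = c that of the squeezed
   part (disp_rate, sq_rate, sq_rate0 below), both depending only on the number
   y of squeezed photons.  M probes with squeezing fraction xi and a single
   probe with fraction xi / M have the same y, so M I(xi; N / M) and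
   I(xi / M; N) differ only in the weights of A(y) and B(y): if A(y) >= B(y)
   the single probe wins.  Otherwise M I(xi; N / M) <= 4 N c with c > 1, which
   forces eta > 1 / sqrt 2; then, for N beyond a threshold, a single probe with
   a fixed number y0 of squeezed photons, A(y0) > c, beats 4 N c.
   Finally (1 / 4N) dI/dxi at xi = 1 equals c / u^2 - A(N), with
   u = 1 + 2 N eta^2 (1 - eta^2), so at a root u^2 <= c, which bounds it. *)

Lemma inv_sqrt2_le_iff x : 0 < x -> (x <= / sqrt 2 <-> x ^ 2 <= / 2).
Proof.
  intros Hx.
  assert (Hs : 0 < sqrt 2) by (apply sqrt_lt_R0; lra).
  assert (Hr : / sqrt 2 * / sqrt 2 = / 2)
    by (rewrite <- Rinv_mult, sqrt_sqrt; lra).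
  assert (0 < / sqrt 2) by (apply Rinv_0_lt_compat; lra).
  split; intros; nra.
Qed.

Lemma Lub_Rbar_real_le (E F : R -> Prop) :
  (exists x, E x) -> (exists x, F x) -> (exists b, forall y, F y -> y <= b) ->
  (forall x, E x -> exists y, F y /\ x <= y) ->
  real (Lub_Rbar E) <= real (Lub_Rbar F).
Proof.
  intros [x0 Ex0] [y0 Fy0] [b Fb] Hdom.
  destruct (Lub_Rbar_correct F) as [HubF HlubF].
  destruct (Lub_Rbar_correct E) as [HubE HlubE].
  assert (HFb : Rbar_le (Lub_Rbar F) b) by (apply HlubF; intros y Fy; apply Fb, Fy).
  assert (HFy0 := HubF y0 Fy0).
  destruct (Lub_Rbar F) as [s| |]; try contradiction.
  assert (HEs : Rbar_le (Lub_Rbar E) s).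
  { apply HlubE. intros x Ex. destruct (Hdom x Ex) as [y [Fy Hxy]].
    specialize (HubF y Fy). simpl in *. lra. }
  assert (HEx0 := HubE x0 Ex0).
  destruct (Lub_Rbar E); try contradiction. exact HEs.
Qed.

Lemma is_lim_p_infty_le (f : R -> R) (a C : R) (l : Rbar) :
  (forall x, a <= x -> f x <= C) -> is_lim f p_infty l -> Rbar_le l C.
Proof.
  intros Hf Hl. apply (is_lim_le_loc f (fun _ => C) p_infty); auto.
  - exists a. intros x Hx. apply Hf. lra.
  - apply is_lim_const.
Qed.

Definition sq_excess (y : R) : R := sqrt (y * (1 + y)) - y.

Lemma sq_excess_bounds y : 0 <= y -> 0 <= sq_excess y < / 2.
Proof.
  intros Hy. unfold sq_excess.
  assert (Hs := sqrt_pos (y * (1 + y))).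
  assert (Hss := sqrt_sqrt (y * (1 + y)) ltac:(nra)).
  split; nra.
Qed.

Lemma sq_excess_inverse h : 0 <= h < / 2 -> sq_excess (h ^ 2 / (1 - 2 * h)) = h.
Proof.
  intros Hh. unfold sq_excess.
  replace (h ^ 2 / (1 - 2 * h) * (1 + h ^ 2 / (1 - 2 * h)))
    with ((h ^ 2 / (1 - 2 * h) + h) * (h ^ 2 / (1 - 2 * h) + h)) by (field; lra).
  rewrite sqrt_square; [ring|].
  assert (0 <= h ^ 2 / (1 - 2 * h)) by (apply Rdiv_le_0_compat; nra).
  lra.
Qed.

Definition sq_rate0 (eta : R) : R := ((1 - eta ^ 2) ^ 2 + eta ^ 4) / (1 - eta ^ 2).

Definition disp_rate (eta y : R) : R := / (1 - 2 * eta ^ 2 * sq_excess y).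

Definition sq_rate (eta y : R) : R :=
  sq_rate0 eta / (1 + 2 * y * eta ^ 2 * (1 - eta ^ 2)).

(* Any h < 1/2 with sq_rate0 eta * (1 - 2 eta^2 h) < 1 would do; this one
   makes that product 1 - eta^2 + eta^4. *)
Definition squeeze_excess (eta : R) : R :=
  eta ^ 4 / (2 * ((1 - eta ^ 2) ^ 2 + eta ^ 4)).

Definition squeeze_photons (eta : R) : R :=
  squeeze_excess eta ^ 2 / (1 - 2 * squeeze_excess eta).

Definition squeeze_threshold (eta : R) : R :=
  squeeze_photons eta / (eta ^ 2 * (1 - eta ^ 2)).

Definition dI1_root_bound (eta : R) : R :=
  (sq_rate0 eta - 1) / (2 * eta ^ 2 * (1 - eta ^ 2)).

Lemma Iqfi_rates eta xi NS :
  Iqfi eta xi NS =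
  4 * NS * ((1 - xi) * disp_rate eta (xi * NS) + xi * sq_rate eta (xi * NS)).
Proof.
  unfold Iqfi, disp_rate, sq_rate, sq_rate0, sq_excess, Rdiv.
  rewrite Rinv_mult. replace (2 * (xi * NS)) with (2 * xi * NS) by ring. ring.
Qed.

Section Rates.

Variable eta : R.
Hypothesis Heta : 0 < eta < 1.

Let Ht : 0 < eta ^ 2 < 1.
Proof. split; nra. Qed.

Lemma disp_rate_bounds y : 0 <= y -> 1 <= disp_rate eta y <= / (1 - eta ^ 2).
Proof.
  intros Hy. unfold disp_rate. destruct (sq_excess_bounds y Hy).
  assert (1 - eta ^ 2 < 1 - 2 * eta ^ 2 * sq_excess y <= 1) by nra.
  split.
  - rewrite <- Rinv_1. apply Rinv_le_contravar; lra.
  - apply Rinv_le_contravar; lra.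
Qed.

Lemma sq_rate0_gt1 : 1 < sq_rate0 eta -> / 2 < eta ^ 2.
Proof.
  unfold sq_rate0. intros Hc. apply Rlt_div_r in Hc; [|lra].
  replace (eta ^ 4) with (eta ^ 2 * eta ^ 2) in Hc by ring. nra.
Qed.

Lemma sq_rate0_pos : 0 < sq_rate0 eta.
Proof.
  unfold sq_rate0. apply Rdiv_lt_0_compat; [|lra].
  assert (0 < eta ^ 4) by (apply pow_lt; lra). nra.
Qed.

Lemma sq_rate_bounds y : 0 <= y -> 0 <= sq_rate eta y <= sq_rate0 eta.
Proof.
  intros Hy. assert (Hc := sq_rate0_pos). unfold sq_rate.
  assert (1 <= 1 + 2 * y * eta ^ 2 * (1 - eta ^ 2))
    by (assert (0 <= y * eta ^ 2 * (1 - eta ^ 2)) by (apply Rmult_le_pos; nra); nra).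
  split.
  - apply Rlt_le, Rdiv_lt_0_compat; lra.
  - apply Rle_div_l; nra.
Qed.

Lemma dI1_eq N : 0 < N ->
  dI1 eta N = sq_rate0 eta / (1 + 2 * N * eta ^ 2 * (1 - eta ^ 2)) ^ 2 - disp_rate eta N.
Proof.
  intros HN. destruct (sq_excess_bounds N) as [h0 h1]; [lra|]. unfold sq_excess in h0, h1.
  assert (Hs : 0 < sqrt (N * (1 + N))) by (apply sqrt_lt_R0; nra).
  assert (Hu : 0 < 1 + 2 * N * eta ^ 2 * (1 - eta ^ 2))
    by (assert (0 <= N * eta ^ 2 * (1 - eta ^ 2)) by (apply Rmult_le_pos; nra); nra).
  unfold dI1.
  rewrite (is_derive_unique _ _ (4 * N * (sq_rate0 eta
     / (1 + 2 * N * eta ^ 2 * (1 - eta ^ 2)) ^ 2 - disp_rate eta N))).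
  - field. lra.
  - unfold Iqfi, disp_rate, sq_rate0, sq_excess. auto_derive.
    + rewrite Rmult_1_l. repeat split; nra.
    + rewrite !Rmult_1_l, !Rmult_1_r. field. repeat split; nra.
Qed.

Lemma dI1_root_le N : 0 < N -> dI1 eta N = 0 -> N <= dI1_root_bound eta.
Proof.
  unfold dI1_root_bound.
  intros HN Hroot. rewrite dI1_eq in Hroot by lra.
  destruct (disp_rate_bounds N) as [HA _]; [lra|].
  set (u := 1 + 2 * N * eta ^ 2 * (1 - eta ^ 2)) in *.
  assert (Hu : 1 <= u)
    by (assert (0 <= N * eta ^ 2 * (1 - eta ^ 2)) by (apply Rmult_le_pos; nra); unfold u; nra).
  assert (Hcu : u ^ 2 <= sq_rate0 eta).
  { assert (H : 1 <= sq_rate0 eta / u ^ 2) by lra.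
    apply Rle_div_r in H; nra. }
  apply Rle_div_r; [nra|].
  replace (N * (2 * eta ^ 2 * (1 - eta ^ 2))) with (u - 1) by (unfold u; ring). nra.
Qed.

Lemma Iqfi_spread_le NN M xi : 0 < NN -> 1 <= M -> 0 <= xi <= 1 ->
  M * Iqfi eta xi (NN / M) <= Iqfi eta (xi / M) NN \/
  (1 < sq_rate0 eta /\ M * Iqfi eta xi (NN / M) <= 4 * NN * sq_rate0 eta).
Proof.
  intros HNN HM Hxi.
  rewrite !Iqfi_rates. replace (xi * (NN / M)) with (xi / M * NN) by (field; lra).
  assert (Hy : 0 <= xi / M * NN)
    by (apply Rmult_le_pos; [apply Rdiv_le_0_compat|]; lra).
  assert (Hd : 0 <= xi / M <= xi).
  { split; [apply Rdiv_le_0_compat; lra|]. apply Rle_div_l; nra. }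
  destruct (disp_rate_bounds _ Hy), (sq_rate_bounds _ Hy).
  set (A := disp_rate eta (xi / M * NN)) in *.
  set (B := sq_rate eta (xi / M * NN)) in *.
  replace (M * (4 * (NN / M) * ((1 - xi) * A + xi * B)))
    with (4 * NN * ((1 - xi) * A + xi * B)) by (field; lra).
  destruct (Rle_lt_dec B A).
  - left. apply Rmult_le_compat_l; nra.
  - right. split; [lra|]. apply Rmult_le_compat_l; nra.
Qed.

Lemma Iqfi_ge_disp_rate y NN : 0 <= y <= NN -> 0 < NN ->
  4 * (NN - y) * disp_rate eta y <= Iqfi eta (y / NN) NN.
Proof.
  intros Hy HNN. rewrite Iqfi_rates.
  replace (y / NN * NN) with y by (field; lra).
  destruct (sq_rate_bounds y) as [HB _]; [lra|].
  assert (0 <= y / NN) by (apply Rdiv_le_0_compat; lra).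
  replace (4 * NN * ((1 - y / NN) * disp_rate eta y + y / NN * sq_rate eta y))
    with (4 * (NN - y) * disp_rate eta y + 4 * NN * (y / NN * sq_rate eta y))
    by (field; lra).
  assert (0 <= NN * (y / NN * sq_rate eta y)) by (apply Rmult_le_pos; nra).
  lra.
Qed.

Lemma squeeze_excess_bounds : 0 < squeeze_excess eta < / 2.
Proof.
  unfold squeeze_excess.
  assert (0 < (1 - eta ^ 2) ^ 2) by (apply pow_lt; lra).
  assert (0 < eta ^ 4) by (apply pow_lt; lra).
  split; [apply Rdiv_lt_0_compat; lra|].
  apply Rlt_div_l; lra.
Qed.

Lemma disp_rate_squeeze_photons :
  sq_rate0 eta / disp_rate eta (squeeze_photons eta) = 1 - eta ^ 2 + eta ^ 4.
Proof.
  assert (Hh := squeeze_excess_bounds).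
  unfold disp_rate, squeeze_photons. rewrite sq_excess_inverse by lra.
  unfold sq_rate0, squeeze_excess. field.
  replace (eta ^ 4) with (eta ^ 2 * eta ^ 2) by ring.
  repeat split; nra.
Qed.

Lemma squeeze_photons_pos : 0 < squeeze_photons eta.
Proof.
  assert (Hh := squeeze_excess_bounds).
  apply Rdiv_lt_0_compat; [apply pow_lt|]; lra.
Qed.

Lemma exists_Iqfi_ge_sq_rate0 NN :
  squeeze_threshold eta <= NN ->
  exists xi, 0 <= xi <= 1 /\ 4 * NN * sq_rate0 eta <= Iqfi eta xi NN.
Proof.
  unfold squeeze_threshold. intros HNN.
  assert (Hy := squeeze_photons_pos).
  set (y := squeeze_photons eta) in *.
  assert (Hty : y <= NN * (eta ^ 2 * (1 - eta ^ 2))) by (apply Rle_div_l in HNN; nra).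
  assert (Ht1 : 0 < eta ^ 2 * (1 - eta ^ 2) < 1) by nra.
  assert (HNN0 : 0 < NN) by nra.
  assert (HyNN : y <= NN) by nra.
  exists (y / NN). split.
  { split; [apply Rdiv_le_0_compat|apply Rle_div_l]; nra. }
  eapply Rle_trans; [|apply Iqfi_ge_disp_rate; nra].
  destruct (disp_rate_bounds y) as [HA _]; [lra|].
  assert (Hc := disp_rate_squeeze_photons). fold y in Hc.
  assert (Hc' : sq_rate0 eta = (1 - eta ^ 2 + eta ^ 4) * disp_rate eta y)
    by (rewrite <- Hc; field; lra).
  rewrite Hc'.
  replace (4 * NN * ((1 - eta ^ 2 + eta ^ 4) * disp_rate eta y))
    with (4 * (NN * (1 - eta ^ 2 + eta ^ 2 * eta ^ 2)) * disp_rate eta y) by ring.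
  apply Rmult_le_compat_r; lra.
Qed.

Lemma Iqfi_le xi NN : 0 <= xi <= 1 -> 0 <= NN ->
  Iqfi eta xi NN <= 4 * NN * (/ (1 - eta ^ 2) + sq_rate0 eta).
Proof.
  intros Hxi HNN. rewrite Iqfi_rates.
  assert (Hy : 0 <= xi * NN) by nra.
  destruct (disp_rate_bounds _ Hy), (sq_rate_bounds _ Hy).
  apply Rmult_le_compat_l; nra.
Qed.

Lemma Iqfi_spread_dominated NN : 0 < NN ->
  (1 < sq_rate0 eta -> squeeze_threshold eta <= NN) ->
  forall M xi, 1 <= M -> 0 <= xi <= 1 ->
  exists xi', 0 <= xi' <= 1 /\ M * Iqfi eta xi (NN / M) <= Iqfi eta xi' NN.
Proof.
  intros HNN Hsq M xi HM Hxi.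
  destruct (Iqfi_spread_le NN M xi HNN HM Hxi) as [Hle | [Hc Hle]].
  - exists (xi / M). split; [|exact Hle].
    split; [apply Rdiv_le_0_compat|apply Rle_div_l]; nra.
  - destruct (exists_Iqfi_ge_sq_rate0 NN (Hsq Hc)) as [xi' [Hxi' Hge]].
    exists xi'. split; [exact Hxi'|lra].
Qed.

Lemma calI_le_calI1 NN : 0 < NN ->
  (1 < sq_rate0 eta -> squeeze_threshold eta <= NN) ->
  forall M, 1 <= M -> calI eta M NN <= calI eta 1 NN.
Proof.
  intros HNN Hsq M HM. unfold calI. rewrite Rdiv_1_r.
  apply Lub_Rbar_real_le.
  - exists (M * Iqfi eta 0 (NN / M)), 0. split; [lra|reflexivity].
  - exists (1 * Iqfi eta 0 NN), 0. split; [lra|reflexivity].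
  - exists (4 * NN * (/ (1 - eta ^ 2) + sq_rate0 eta)).
    intros y [xi [Hxi ->]]. rewrite Rmult_1_l. apply Iqfi_le; lra.
  - intros y [xi [Hxi ->]].
    destruct (Iqfi_spread_dominated NN HNN Hsq M xi HM Hxi) as [xi' [Hxi' Hle]].
    exists (1 * Iqfi eta xi' NN). split; [exists xi'; auto|lra].
Qed.

Lemma calI_maximal_at_1 NN : 0 < NN ->
  (1 < sq_rate0 eta -> squeeze_threshold eta <= NN) ->
  (forall M, 1 <= M -> calI eta M NN <= calI eta 1 NN) /\
  (forall l, is_lim (fun M => calI eta M NN) p_infty l -> Rbar_le l (calI eta 1 NN)).
Proof.
  intros HNN Hsq. split.
  - exact (calI_le_calI1 NN HNN Hsq).
  - intros l. apply is_lim_p_infty_le with 1. exact (calI_le_calI1 NN HNN Hsq).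
Qed.

End Rates.

Theorem proposition6 (eta : R) (Heta : 0 < eta < 1) :
  exists Kbar : R,
    0 <= Kbar /\
    (eta <= / sqrt 2 -> Kbar = 0) /\
    (/ sqrt 2 < eta ->
       forall Nbar : R, 0 < Nbar -> dI1 eta Nbar = 0 -> Nbar <= Kbar) /\
    (forall NN : R, Kbar < NN ->
       (forall M : R, 1 <= M -> calI eta M NN <= calI eta 1 NN) /\
       (forall l : Rbar, is_lim (fun M => calI eta M NN) p_infty l ->
          Rbar_le l (calI eta 1 NN))).
Proof.
  assert (HKsq : 0 < squeeze_threshold eta).
  { apply Rdiv_lt_0_compat; [apply squeeze_photons_pos; assumption|].
    apply Rmult_lt_0_compat; nra. }
  destruct (Rle_lt_dec (eta ^ 2) (/ 2)) as [Hsmall | Hlarge].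
  - exists 0. split; [lra|]. split; [reflexivity|]. split.
    + intros Hgt. apply inv_sqrt2_le_iff in Hsmall; lra.
    + intros NN HNN. apply calI_maximal_at_1; [assumption..|].
      intros Hc. apply sq_rate0_gt1 in Hc; lra.
  - exists (Rmax (dI1_root_bound eta) (squeeze_threshold eta)).
    assert (Hroot := Rmax_l (dI1_root_bound eta) (squeeze_threshold eta)).
    assert (Hsq := Rmax_r (dI1_root_bound eta) (squeeze_threshold eta)).
    split; [lra|]. split.
    + intros Hle. apply inv_sqrt2_le_iff in Hle; lra.
    + split.
      * intros _ N HN HN0. apply dI1_root_le in HN0; lra.
      * intros NN HNN. apply calI_maximal_at_1; [assumption|lra|intros _; lra].
Qed.
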